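(* Let $G=(V,E)$ be a finite graph with nonnegative interactions $J$, and let $\mu$ be the Ising measure with no external field. Then for any vertices $u,v_1,\dots,v_k\in V$, $$\mathbb E_\mu[\sigma(u)\mid \sigma(v_i)=1\text{ for all }1\le i\le k]\le\sum_{i=1}^k\mathbb E_\mu[\sigma(u)\mid\sigma(v_i)=1].$$
   Context: The Ising measure with no external field is $\mu(\sigma)=Z^{-1}\exp(\sum_{uv\in E}J_{uv}\sigma(u)\sigma(v))$ on $\{\pm1\}^V$, $J_{uv}\ge0$. *)

From HB Require Import structures.
From mathcomp Require Import all_boot all_order all_algebra.
From mathcomp Require Import reals.
From mathcomp Require Import sequences exp.
Set Implicit Arguments. Unset Strict Implicit. Unset Printing Implicit Defensive.
Import Order.TTheory GRing.Theory Num.Theory.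
Local Open Scope ring_scope.

Definition spin (R : realType) (b : bool) : R := if b then 1 else -1.

(* A finite graph: edges E : {set {set V}}, each edge a 2-element set {u,v};
   interactions J : {set V} -> R. Hamiltonian sum_{uv in E} J_uv s(u) s(v). *)
Definition ising_energy (R : realType) (V : finType) (E : {set {set V}})
  (J : {set V} -> R) (s : {ffun V -> bool}) : R :=
  \sum_(e in E) J e * \prod_(x in e) spin R (s x).

Definition ising_weight (R : realType) (V : finType) (E : {set {set V}})
  (J : {set V} -> R) (s : {ffun V -> bool}) : R :=
  expR (ising_energy E J s).

Definition ising_Z (R : realType) (V : finType) (E : {set {set V}})
  (J : {set V} -> R) : R :=
  \sum_(s : {ffun V -> bool}) ising_weight E J s.

Definition ising_mu (R : realType) (V : finType) (E : {set {set V}})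
  (J : {set V} -> R) (s : {ffun V -> bool}) : R :=
  ising_weight E J s / ising_Z E J.

Definition cond_exp (R : realType) (V : finType) (E : {set {set V}})
  (J : {set V} -> R) (f : {ffun V -> bool} -> R) (A : pred {ffun V -> bool}) : R :=
  (\sum_(s | A s) ising_mu E J s * f s) / (\sum_(s | A s) ising_mu E J s).

(* Let N and D be the sums of the weight times sigma(u), resp. of the weight,
   over configurations with sigma(v_i) = +1 for all i, and Z_i the sum of the
   weight times sigma(u) sigma(v_i).  By spin-flip symmetry
   E[sigma(u) | sigma(v_i) = 1] = Z_i / Z, so the claim is N Z - D sum_i Z_i <= 0.
   Writing the second replica as the pointwise product s t, this difference is
   sum_(s,t) w(s) w(s t) 1[s(v) = +] sigma_u(s) (1 - sum_i sigma_u sigma_(v_i)(t)).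
   Edge by edge, w(s) w(s t) is a combination with nonnegative coefficients
   (as J >= 0) of sigma_L(s) 1[t constant on the edges of K], L in K in E.
   Each such term factors: the sum over s is a character sum over the subgroup
   {s(v_i) = + for all i}, hence nonnegative, and it vanishes unless u is joined
   in K to some v_i0; the sum over t then runs over K-aligned configurations,
   where sigma_u sigma_(v_i0) = 1 cancels the constant term and the remaining
   correlations are again nonnegative character sums. *)

From HB Require Import structures.
From mathcomp Require Import all_boot all_order all_algebra.
From mathcomp Require Import reals.
From mathcomp Require Import sequences exp.
From mathcomp Require Import ring lra.
Import Order.TTheory GRing.Theory Num.Theory.
Local Open Scope ring_scope.
Set Implicit Arguments. Unset Strict Implicit. Unset Printing Implicit Defensive.

Section Configurations.
Variables (R : realType) (V : finType).
Local Notation cfg := {ffun V -> bool}.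

Definition cfg_mul (s r : cfg) : cfg := [ffun x => s x == r x].

Lemma cfg_mulK r : involutive (cfg_mul ^~ r).
Proof. by move=> s; apply/ffunP => x; rewrite !ffunE; case: (s x); case: (r x). Qed.

Lemma cfg_mulC : commutative cfg_mul.
Proof. by move=> s r; apply/ffunP => x; rewrite !ffunE eq_sym. Qed.

Lemma sum_cfg_mul r (F : cfg -> R) : \sum_s F (cfg_mul s r) = \sum_s F s.
Proof. by rewrite [RHS](reindex_inj (inv_inj (cfg_mulK r))). Qed.

Lemma sum_odd_eq0 r (F : cfg -> R) :
  (forall s, F (cfg_mul s r) = - F s) -> \sum_s F s = 0.
Proof.
move=> Fodd; have : \sum_s F s = - \sum_s F s.
  by rewrite -{1}(sum_cfg_mul r) -sumrN; apply: eq_bigr => s _; apply: Fodd.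
lra.
Qed.

Lemma spin_eqb a b : spin R (a == b) = spin R a * spin R b.
Proof. by case: a; case: b; rewrite /spin /=; ring. Qed.

Lemma spin_sign a : spin R a = 1 \/ spin R a = -1.
Proof. by case: a; [left | right]. Qed.

Lemma spin_mul_self a : spin R a * spin R a = 1.
Proof. by case: a; rewrite /spin ?mulr1 ?mulrNN ?mulr1. Qed.

Lemma sign_mul (x y : R) :
  x = 1 \/ x = -1 -> y = 1 \/ y = -1 -> x * y = 1 \/ x * y = -1.
Proof.
by move=> [->|->] [->|->]; rewrite ?mulr1 ?mul1r ?mulrNN ?mulr1; [left|right|right|left].
Qed.

Lemma sign_prod (I : finType) (P : pred I) (F : I -> R) :
  (forall i, F i = 1 \/ F i = -1) ->
  \prod_(i | P i) F i = 1 \/ \prod_(i | P i) F i = -1.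
Proof.
by move=> Fsign; apply: (big_ind (fun x : R => x = 1 \/ x = -1)); [left | apply: sign_mul |].
Qed.

(* Either g = 1 on P, or shifting by some r in P with g r = -1 negates the sum. *)
Lemma sum_character_ge0 (P : pred cfg) (g : cfg -> R) :
  (forall s, g s = 1 \/ g s = -1) ->
  (forall s r, g (cfg_mul s r) = g s * g r) ->
  (forall s r, P s -> P r -> P (cfg_mul s r)) ->
  0 <= \sum_(s | P s) g s.
Proof.
move=> g_sign gM PM.
have [/existsP[r /andP[Pr /eqP gr]]|] := boolP [exists r, P r && (g r == -1)].
  have PMr s : P (cfg_mul s r) = P s.
    apply/idP/idP => [Psr|Ps]; last exact: PM.
    by rewrite -(cfg_mulK r s); apply: PM.
  rewrite big_mkcond (sum_odd_eq0 (r := r)) // => s.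
  by rewrite PMr gM gr mulrN1; case: (P s); rewrite ?oppr0.
rewrite negb_exists => /forallP g1; apply: sumr_ge0 => s Ps.
by have := g1 s; rewrite Ps /=; case: (g_sign s) => ->; rewrite ?ler01 ?eqxx.
Qed.

Definition edge_spin (e : {set V}) (s : cfg) : R := \prod_(x in e) spin R (s x).

Lemma edge_spin_mul e s r : edge_spin e (cfg_mul s r) = edge_spin e s * edge_spin e r.
Proof. by rewrite -big_split; apply: eq_bigr => x _; rewrite ffunE spin_eqb. Qed.

Lemma edge_spin_sign e s : edge_spin e s = 1 \/ edge_spin e s = -1.
Proof. by apply: sign_prod => x; apply: spin_sign. Qed.

Lemma edge_spin2_eq1 a b s : a != b ->
  (edge_spin [set a; b] s == 1) = (s a == s b).
Proof.
move=> ab; rewrite /edge_spin big_setU1 /= ?big_set1 ?in_set1 //.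
by case: (s a); case: (s b); rewrite /spin ?mulr1 ?mul1r ?mulN1r ?opprK ?eqxx //=;
  apply/negbTE/eqP; lra.
Qed.

Lemma edge_spin_const (e : {set V}) b : #|e| = 2%N -> edge_spin e [ffun _ => b] = 1.
Proof.
move=> e2; rewrite /edge_spin (eq_bigr (fun _ => spin R b)) => [|x _]; last by rewrite ffunE.
by rewrite prodr_const e2 expr2 spin_mul_self.
Qed.

Definition spin_pair (x y : V) (t : cfg) : R := spin R (t x) * spin R (t y).

Lemma spin_pair_mul x y s r :
  spin_pair x y (cfg_mul s r) = spin_pair x y s * spin_pair x y r.
Proof. by rewrite /spin_pair !ffunE !spin_eqb; ring. Qed.

Lemma spin_pair_sign x y s : spin_pair x y s = 1 \/ spin_pair x y s = -1.
Proof. by apply: sign_mul; apply: spin_sign. Qed.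

Definition two_uniform (K : {set {set V}}) := forall e, e \in K -> #|e| = 2%N.

Definition adj (K : {set {set V}}) : rel V :=
  fun x y => [exists e in K, (x \in e) && (y \in e)].

Lemma adj_sym K : symmetric (adj K).
Proof. by move=> x y; apply: eq_existsb => e; rewrite [(y \in e) && _]andbC. Qed.

Definition aligned K (t : cfg) := [forall x, forall y, adj K x y ==> (t x == t y)].

Lemma alignedP K (t : cfg) : reflect (forall x y, adj K x y -> t x = t y) (aligned K t).
Proof.
apply: (iffP forallP) => [tK x y xy | tK x].
  by apply/eqP; move/forallP: (tK x) => /(_ y); rewrite xy.
by apply/forallP => y; apply/implyP => /tK ->.
Qed.

Lemma aligned_connect K (t : cfg) x y : aligned K t -> connect (adj K) x y -> t x = t y.
Proof.
move=> /alignedP tK xy.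
have cl : closed (adj K) [pred z | t z == t x] by move=> z1 z2 /tK; rewrite !inE => ->.
by have := closed_connect cl xy; rewrite !inE eqxx => /esym/eqP.
Qed.

Lemma aligned_mul K s r : aligned K s -> aligned K r -> aligned K (cfg_mul s r).
Proof.
by move=> /alignedP sK /alignedP rK; apply/alignedP => x y xy; rewrite !ffunE (sK x y) ?(rK x y).
Qed.

Lemma aligned_edge_spinP K t : two_uniform K ->
  reflect (forall e, e \in K -> edge_spin e t = 1) (aligned K t).
Proof.
move=> K2; apply: (iffP (alignedP K t)) => [tK e eK | tK x y /existsP[e /and3P[eK xe ye]]].
  have /cards2P[a [b [ab eab]]] : #|e| == 2%N by rewrite K2.
  apply/eqP; rewrite eab edge_spin2_eq1 //; apply/eqP/tK/existsP; exists e.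
  by rewrite eK eab !in_set2 !eqxx orbT.
have /cards2P[a [b [ab eab]]] : #|e| == 2%N by rewrite K2.
have /eqP := tK e eK; rewrite eab edge_spin2_eq1 // => /eqP tab.
by move: xe ye; rewrite eab !in_set2 => /orP[]/eqP-> /orP[]/eqP->.
Qed.

Definition spin_set (L : {set {set V}}) (s : cfg) : R := \prod_(e in L) edge_spin e s.

Lemma spin_set_mul L s r : spin_set L (cfg_mul s r) = spin_set L s * spin_set L r.
Proof. by rewrite -big_split; apply: eq_bigr => e _; rewrite edge_spin_mul. Qed.

Lemma spin_set_sign L s : spin_set L s = 1 \/ spin_set L s = -1.
Proof. by apply: sign_prod => e; apply: edge_spin_sign. Qed.

Definition edge_ind (e : {set V}) (t : cfg) : R := (1 + edge_spin e t) / 2.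

Definition ind_set (K : {set {set V}}) (t : cfg) : R := \prod_(e in K) edge_ind e t.

Lemma ind_setE K t : two_uniform K -> ind_set K t = (aligned K t)%:R.
Proof.
move=> K2; case: (aligned_edge_spinP t K2) => [tK | ntK].
  by apply: big1 => e eK; rewrite /edge_ind tK //; field.
have /exists_inP[e eK /eqP te] : [exists e in K, edge_spin e t == -1].
  apply: contra_notT ntK => /exists_inPn nK e eK.
  by case: (edge_spin_sign e t) => // te; have := nK e eK; rewrite te eqxx.
by rewrite /ind_set (bigD1 e) //= /edge_ind te subrr !mul0r.
Qed.

Lemma sum_flip_half (G : cfg -> R) (x : V) :
  (forall s, G (cfg_mul s [ffun _ => false]) = G s) ->
  \sum_s G s = 2 * \sum_(s : cfg | s x) G s.
Proof.
move=> Gflip; rewrite (bigID (fun s : cfg => s x)) /= mulr2n mulrDl mul1r; congr (_ + _).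
rewrite big_mkcond [RHS]big_mkcond -(sum_cfg_mul [ffun _ => false]).
by apply: eq_bigr => s _; rewrite Gflip !ffunE; case: (s x).
Qed.

End Configurations.

Section DuplicateExpansion.
Variables (R : realType) (V : finType) (E : {set {set V}}) (J : {set V} -> R).
Local Notation cfg := {ffun V -> bool}.
Local Notation w := (ising_weight E J).

(* For x, y = 1 or -1, exp (J x (1 + y)) = 1 + (1 + y) / 2 * (cosh 2J - 1 + x sinh 2J). *)
Definition bond_cosh (e : {set V}) : R :=
  if e \in E then (expR (2 * J e) + expR (- (2 * J e))) / 2 - 1 else 0.

Definition bond_sinh (e : {set V}) : R :=
  if e \in E then (expR (2 * J e) - expR (- (2 * J e))) / 2 else 0.

Definition dup_factor (e : {set V}) (s t : cfg) : R :=
  1 + edge_ind R e t * (bond_cosh e + bond_sinh e * edge_spin R e s).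

Lemma bond_cosh_ge0 e : 0 <= bond_cosh e.
Proof.
rewrite /bond_cosh; case: (e \in E) => //.
by have := expR_ge1Dx (2 * J e); have := expR_ge1Dx (- (2 * J e)); lra.
Qed.

Lemma bond_sinh_ge0 e : (forall e, e \in E -> 0 <= J e) -> 0 <= bond_sinh e.
Proof.
move=> J0; rewrite /bond_sinh; case eE: (e \in E) => //.
have : expR (- (2 * J e)) <= expR (2 * J e) by rewrite ler_expR; have := J0 e eE; lra.
lra.
Qed.

Lemma weight_mul_prod s t : w s * w (cfg_mul s t) = \prod_e dup_factor e s t.
Proof.
rewrite /ising_weight -expRD /ising_energy -big_split /= expR_sum.
rewrite [RHS](bigID (mem E)) /= [X in _ = _ * X]big1 ?mulr1; last first.
  by move=> e /negbTE eE; rewrite /dup_factor /bond_cosh /bond_sinh eE mul0r addr0 mulr0 addr0.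
apply: eq_bigr => e eE.
rewrite -/(edge_spin R e s) -/(edge_spin R e (cfg_mul s t)) edge_spin_mul.
rewrite /dup_factor /edge_ind /bond_cosh /bond_sinh eE.
case: (edge_spin_sign R e s) => ->; case: (edge_spin_sign R e t) => ->.
- by rewrite (_ : J e * 1 + J e * (1 * 1) = 2 * J e); [field | ring].
- by rewrite (_ : J e * 1 + J e * (1 * -1) = 0) ?expR0; [field | ring].
- by rewrite (_ : J e * -1 + J e * (-1 * 1) = - (2 * J e)); [field | ring].
- by rewrite (_ : J e * -1 + J e * (-1 * -1) = 0) ?expR0; [field | ring].
Qed.

Definition current_coef (K L : {set {set V}}) : R :=
  \prod_e (if e \in L then (if e \in K then bond_sinh e else 0)
           else if e \in K then bond_cosh e else 1).

Lemma dup_factor_expand s t :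
  \prod_e dup_factor e s t =
  \sum_(K : {set {set V}}) \sum_(L : {set {set V}})
    current_coef K L * spin_set R L s * ind_set R K t.
Proof.
rewrite (eq_bigr (fun e => (edge_ind R e t * bond_cosh e +
                            edge_ind R e t * bond_sinh e * edge_spin R e s) + 1));
  last by move=> e _; rewrite /dup_factor; ring.
rewrite bigA_distr; apply: eq_bigr => K _.
rewrite (eq_bigr (fun e => (if e \in K then edge_ind R e t * bond_sinh e * edge_spin R e s else 0) +
                           (if e \in K then edge_ind R e t * bond_cosh e else 1))); last first.
  by move=> e _; case: (e \in K); rewrite ?add0r // addrC.
rewrite bigA_distr; apply: eq_bigr => L _.
rewrite /current_coef /spin_set /ind_set (big_mkcond (mem L)) (big_mkcond (mem K)) -!big_split.
apply: eq_bigr => e _ /=.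
by case: (e \in L); case: (e \in K); rewrite ?mulr1 ?mul1r ?mul0r //; ring.
Qed.

Lemma weight_pair_expand (p q : cfg -> R) :
  \sum_s \sum_t w s * w (cfg_mul s t) * (p s * q t) =
  \sum_(K : {set {set V}}) \sum_(L : {set {set V}})
     current_coef K L * ((\sum_s spin_set R L s * p s) * (\sum_t ind_set R K t * q t)).
Proof.
pose F K L s t := current_coef K L * (spin_set R L s * p s) * (ind_set R K t * q t).
transitivity (\sum_s \sum_t \sum_(K : {set {set V}}) \sum_(L : {set {set V}}) F K L s t).
  apply: eq_bigr => s _; apply: eq_bigr => t _.
  rewrite weight_mul_prod dup_factor_expand mulr_suml; apply: eq_bigr => K _.
  by rewrite mulr_suml; apply: eq_bigr => L _; rewrite /F; ring.
transitivity (\sum_(K : {set {set V}}) \sum_(L : {set {set V}}) \sum_s \sum_t F K L s t).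
  under eq_bigr => s _ do rewrite exchange_big.
  under eq_bigr => s _ do under eq_bigr => K _ do rewrite exchange_big.
  rewrite exchange_big.
  by under eq_bigr => K _ do rewrite exchange_big.
apply: eq_bigr => K _; apply: eq_bigr => L _.
rewrite mulr_suml mulr_sumr; apply: eq_bigr => s _.
rewrite mulr_sumr mulr_sumr; apply: eq_bigr => t _.
by rewrite /F; ring.
Qed.

Lemma current_coef_ge0 K L :
  (forall e, e \in E -> 0 <= J e) -> 0 <= current_coef K L.
Proof.
move=> J0; apply: prodr_ge0 => e _.
by case: (e \in L); case: (e \in K) => //; [exact: bond_sinh_ge0 | exact: bond_cosh_ge0].
Qed.

Lemma current_coef_supp K L : current_coef K L != 0 -> L \subset K /\ K \subset E.
Proof.
move/prodf_neq0 => nz; split; apply/subsetP => e eX; have := nz e isT; rewrite eX.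
  by case: (e \in K); rewrite ?eqxx.
by case: (e \in L); rewrite /bond_sinh /bond_cosh; case: (e \in E); rewrite ?eqxx.
Qed.

End DuplicateExpansion.

Section PinnedSums.
Variables (R : realType) (V : finType) (u : V) (k : nat) (v : 'I_k -> V).
Local Notation cfg := {ffun V -> bool}.

Definition all_plus (s : cfg) := [forall i, s (v i)].

Lemma all_plus_mul s r : all_plus s -> all_plus r -> all_plus (cfg_mul s r).
Proof. by move=> /forallP sv /forallP rv; apply/forallP => i; rewrite ffunE sv rv. Qed.

(* On K-aligned configurations u and v i0 carry the same spin, so the i0-th
   correlation cancels the constant term. *)
Lemma sum_aligned_le0 K i0 : connect (adj K) u (v i0) ->
  \sum_(t | aligned K t) (1 - \sum_i spin_pair R u (v i) t) <= 0.
Proof.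
move=> ui0; rewrite sumrB exchange_big /= subr_le0 (bigD1 i0) //=.
have -> : \sum_(t | aligned K t) (1 : R) = \sum_(t | aligned K t) spin_pair R u (v i0) t.
  by apply: eq_bigr => t tK; rewrite /spin_pair (aligned_connect tK ui0) spin_mul_self.
rewrite lerDl; apply: sumr_ge0 => i _; apply: sum_character_ge0.
- exact: spin_pair_sign.
- exact: spin_pair_mul.
- exact: aligned_mul.
Qed.

Lemma sum_all_plus_ge0 L : 0 <= \sum_(s | all_plus s) spin_set R L s * spin R (s u).
Proof.
apply: sum_character_ge0 => [s | s r | ]; last exact: all_plus_mul.
  by apply: sign_mul; [apply: spin_set_sign | apply: spin_sign].
by rewrite spin_set_mul ffunE spin_eqb; ring.
Qed.

(* Flipping the K-cluster of u preserves [spin_set L] and [all_plus] but flips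
   the spin at u. *)
Lemma sum_all_plus_eq0 K (L : {set {set V}}) :
  two_uniform K -> L \subset K -> (forall i, ~~ connect (adj K) u (v i)) ->
  \sum_(s | all_plus s) spin_set R L s * spin R (s u) = 0.
Proof.
move=> K2 LK nc; pose rho : cfg := [ffun x => ~~ connect (adj K) u x].
have rhoK : aligned K rho.
  apply/alignedP => x y xy; rewrite !ffunE.
  by rewrite (same_connect1r (sym_connect_sym (adj_sym K)) xy).
have rhoL : spin_set R L rho = 1.
  by apply: big1 => e /(subsetP LK); apply/(aligned_edge_spinP R rho K2).
rewrite big_mkcond (sum_odd_eq0 (r := rho)) // => s.
have -> : all_plus (cfg_mul s rho) = all_plus s.
  by apply: eq_forallb => i; rewrite !ffunE (negbTE (nc i)) eqb_id.
rewrite spin_set_mul rhoL mulr1 !ffunE connect0 spin_eqb /= mulrN1 mulrN.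
by case: (all_plus s); rewrite ?oppr0.
Qed.

End PinnedSums.

Section IsingCorrelations.
Variables (R : realType) (V : finType) (E : {set {set V}}) (J : {set V} -> R).
Local Notation cfg := {ffun V -> bool}.
Local Notation w := (ising_weight E J).

Lemma sum_weight_gt0 (P : pred cfg) s0 : P s0 -> 0 < \sum_(s | P s) w s.
Proof.
move=> Ps0; rewrite (bigD1 s0) //=; apply: ltr_pwDl; first exact: expR_gt0.
by apply: sumr_ge0 => s _; apply/ltW/expR_gt0.
Qed.

Lemma ising_Z_gt0 : 0 < ising_Z E J.
Proof. exact: (@sum_weight_gt0 predT [ffun _ => true]). Qed.

Lemma cond_expE (f : cfg -> R) (A : pred cfg) :
  cond_exp E J f A = (\sum_(s | A s) w s * f s) / (\sum_(s | A s) w s).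
Proof.
rewrite /cond_exp /ising_mu.
under eq_bigr => s _ do rewrite mulrAC.
by rewrite -!mulr_suml invf_div mulrA divfK // gt_eqF // ising_Z_gt0.
Qed.

Hypothesis E2 : two_uniform E.

(* Global spin flip preserves the weight only because every edge has two ends. *)
Lemma ising_weight_flip s : w (cfg_mul s [ffun _ => false]) = w s.
Proof.
rewrite /ising_weight /ising_energy; congr expR; apply: eq_bigr => e eE.
by rewrite -!/(edge_spin R e _) edge_spin_mul edge_spin_const ?mulr1 ?E2.
Qed.

Lemma cond_exp_plus u x :
  cond_exp E J (fun s => spin R (s u)) (fun s => s x) =
  (\sum_s w s * spin_pair R u x s) / ising_Z E J.
Proof.
rewrite cond_expE.
have Z2 : ising_Z E J = 2 * \sum_(s : cfg | s x) w s.
  exact: sum_flip_half ising_weight_flip.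
have N2 : \sum_s w s * spin_pair R u x s = 2 * \sum_(s : cfg | s x) w s * spin R (s u).
  rewrite (sum_flip_half x) => [|s]; last first.
    by rewrite ising_weight_flip spin_pair_mul {2}/spin_pair !ffunE spin_mul_self mulr1.
  by congr (_ * _); apply: eq_bigr => s sx; rewrite /spin_pair sx mulr1.
have D0 : 0 < \sum_(s : cfg | s x) w s.
  by apply: (sum_weight_gt0 (s0 := [ffun _ => true])); rewrite ffunE.
by rewrite N2 Z2; field; rewrite gt_eqF.
Qed.

End IsingCorrelations.

Section DuplicateSum.
Variables (R : realType) (V : finType) (E : {set {set V}}) (J : {set V} -> R).
Variables (u : V) (k : nat) (v : 'I_k -> V).
Local Notation w := (ising_weight E J).

Definition gap_sum : R :=
  \sum_s \sum_t w s * w (cfg_mul s t) *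
    ((all_plus v s)%:R * spin R (s u) * (1 - \sum_i spin_pair R u (v i) t)).

Lemma gap_sumE :
  gap_sum =
  (\sum_(s | all_plus v s) w s * spin R (s u)) * ising_Z E J -
  (\sum_i \sum_t w t * spin_pair R u (v i) t) * \sum_(s | all_plus v s) w s.
Proof.
have sum_shift s : all_plus v s ->
    \sum_t w (cfg_mul s t) * (1 - \sum_i spin_pair R u (v i) t) =
    ising_Z E J - spin R (s u) * \sum_i \sum_t w t * spin_pair R u (v i) t.
  move=> /forallP sv; rewrite -[LHS](sum_cfg_mul s).
  under eq_bigr => t _ do rewrite cfg_mulC cfg_mulK.
  rewrite exchange_big mulr_sumr /ising_Z -sumrB; apply: eq_bigr => t _.
  rewrite mulrBr mulr1 !mulr_sumr; congr (_ - _); apply: eq_bigr => i _.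
  by rewrite spin_pair_mul {2}/spin_pair sv /=; ring.
rewrite /gap_sum mulr_suml mulr_sumr -sumrB [RHS]big_mkcond; apply: eq_bigr => s _.
case: ifP => [sv | _]; last by rewrite big1 // => t _; rewrite !mul0r mulr0.
rewrite [true%:R]/= mul1r.
transitivity (w s * spin R (s u) *
  \sum_t w (cfg_mul s t) * (1 - \sum_i spin_pair R u (v i) t)).
  by rewrite mulr_sumr; apply: eq_bigr => t _; ring.
rewrite sum_shift // mulrBr; congr (_ - _).
by rewrite mulrA -(mulrA (w s)) spin_mul_self mulr1 mulrC.
Qed.

Lemma gap_sum_le0 :
  two_uniform E -> (forall e, e \in E -> 0 <= J e) -> gap_sum <= 0.
Proof.
move=> E2 J0; rewrite /gap_sum weight_pair_expand.
apply: sumr_le0 => K _; apply: sumr_le0 => L _.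
have [->|nz] := eqVneq (current_coef E J K L) 0; first by rewrite mul0r.
have [LK KE] := current_coef_supp nz.
have K2 : two_uniform K by move=> e /(subsetP KE)/E2.
have -> : \sum_s spin_set R L s * ((all_plus v s)%:R * spin R (s u)) =
          \sum_(s | all_plus v s) spin_set R L s * spin R (s u).
  rewrite [RHS]big_mkcond; apply: eq_bigr => s _.
  by case: (all_plus v s); rewrite ?mul1r ?mul0r ?mulr0.
have -> : \sum_t ind_set R K t * (1 - \sum_i spin_pair R u (v i) t) =
          \sum_(t | aligned K t) (1 - \sum_i spin_pair R u (v i) t).
  rewrite [RHS]big_mkcond; apply: eq_bigr => t _.
  by rewrite ind_setE //; case: (aligned K t); rewrite ?mul1r ?mul0r.
have [/existsP[i0 ui0] | ] := boolP [exists i, connect (adj K) u (v i)].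
  apply: mulr_ge0_le0; first exact: current_coef_ge0.
  by apply: mulr_ge0_le0; [exact: sum_all_plus_ge0 | exact: sum_aligned_le0 ui0].
rewrite negb_exists => /forallP nc.
by rewrite (sum_all_plus_eq0 R K2 LK nc) mul0r mulr0.
Qed.

End DuplicateSum.

Theorem corollary2p6 (R : realType) (V : finType) (E : {set {set V}})
  (J : {set V} -> R)
  (hE : forall e, e \in E -> #|e| = 2%N)
  (hJ : forall e, e \in E -> 0 <= J e)
  (u : V) (k : nat) (v : 'I_k -> V) :
  cond_exp E J (fun s => spin R (s u)) (fun s => [forall i, s (v i)])
  <= \sum_(i < k) cond_exp E J (fun s => spin R (s u)) (fun s => s (v i)).
Proof.
have Z0 := ising_Z_gt0 E J.
have D0 : 0 < \sum_(s | all_plus v s) ising_weight E J s.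
  by apply: (@sum_weight_gt0 R V E J _ [ffun _ => true]); apply/forallP => i; rewrite ffunE.
under eq_bigr => i _ do rewrite (cond_exp_plus J hE).
rewrite cond_expE -mulr_suml ler_pdivrMr // mulrAC ler_pdivlMr // -subr_le0.
by rewrite -gap_sumE gap_sum_le0.
Qed.
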